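(* Let $(X,\mathrm{d})$ be a compact metric space and $f$ a bi-Lipschitz homeomorphism of $X$ such that $\mathrm{d}$ is $f$-hyperbolic. Then $f$ is Lipschitz-robustly expansive: there are $\epsilon,\delta>0$ such that every bi-Lipschitz homeomorphism $g$ of $(X,\mathrm{d})$ with $\mathrm{d}_L(f,g)<\epsilon$ is expansive with expansive constant $\delta$. Equivalently, every expansive homeomorphism of a compact metric space is Lipschitz-robustly expansive with respect to an $f$-hyperbolic metric.
   Context: A homeomorphism $g$ is expansive with expansive constant $\delta>0$ if $\mathrm{d}(g^n(x),g^n(y))\le\delta$ for all $n\in\mathbb Z$ implies $x=y$. A metric $\mathrm{d}$ defining the topology is $f$-hyperbolic if there are $\delta>0$, $\lambda>1$ such that $\mathrm{d}(x,y)<\delta$ implies $\max\{\mathrm{d}(f(x),f(y)),\mathrm{d}(f^{-1}(x),f^{-1}(y))\}\ge\lambda\,\mathrm{d}(x,y)$. $\mathrm{d}_{C^0}(f,g)=\max_{x}\mathrm{d}(f(x),g(x))+\max_x\mathrm{d}(f^{-1}(x),g^{-1}(x))$; $\mathrm{d}'_L(f,g)=\sup_{x\ne y}\left|\log\frac{\mathrm{d}(f(x),f(y))}{\mathrm{d}(g(x),g(y))}\right|$; $\mathrm{d}_L(f,g)=\mathrm{d}_{C^0}(f,g)+\mathrm{d}'_L(f,g)+\mathrm{d}'_L(f^{-1},g^{-1})$. *)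

From Stdlib Require Import Reals ZArith List.
Open Scope R_scope.

Section Defs.
Context {X : Type}.

Definition is_metric (d : X -> X -> R) : Prop :=
  (forall x y, 0 <= d x y) /\
  (forall x y, d x y = 0 <-> x = y) /\
  (forall x y, d x y = d y x) /\
  (forall x y z, d x z <= d x y + d y z).

Definition open_set (d : X -> X -> R) (U : X -> Prop) : Prop :=
  forall x, U x -> exists r, 0 < r /\ forall y, d x y < r -> U y.

Definition metric_compact (d : X -> X -> R) : Prop :=
  forall (I : Type) (U : I -> X -> Prop),
    (forall i, open_set d (U i)) ->
    (forall x, exists i, U i x) ->
    exists l : list I, forall x, exists i, In i l /\ U i x.

Definition bilipschitz_homeo (d : X -> X -> R) (f fi : X -> X) : Prop :=
  (forall x, fi (f x) = x) /\ (forall x, f (fi x) = x) /\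
  exists L, 0 < L /\
    (forall x y, d (f x) (f y) <= L * d x y) /\
    (forall x y, d (fi x) (fi y) <= L * d x y).

Definition f_hyperbolic (d : X -> X -> R) (f fi : X -> X) : Prop :=
  exists delta lambda, 0 < delta /\ 1 < lambda /\
    forall x y, d x y < delta ->
      Rmax (d (f x) (f y)) (d (fi x) (fi y)) >= lambda * d x y.

Definition ziter (g gi : X -> X) (n : Z) (x : X) : X :=
  match n with
  | Z0 => x
  | Zpos p => Nat.iter (Pos.to_nat p) g x
  | Zneg p => Nat.iter (Pos.to_nat p) gi x
  end.

Definition expansive_const (d : X -> X -> R) (g gi : X -> X) (delta : R) : Prop :=
  forall x y, (forall n : Z, d (ziter g gi n x) (ziter g gi n y) <= delta) -> x = y.

(* d_L(f,g) < eps, where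
   d_L(f,g) = max_x d(fx,gx) + max_x d(f^-1 x, g^-1 x)
             + sup_{x<>y} |log (d(fx,fy)/d(gx,gy))|
             + sup_{x<>y} |log (d(f^-1x,f^-1y)/d(g^-1x,g^-1y))|.
   A sum of suprema is < eps iff there are upper bounds of the four
   quantities whose sum is < eps. *)
Definition dL_lt (d : X -> X -> R) (f fi g gi : X -> X) (eps : R) : Prop :=
  exists a b c e, a + b + c + e < eps /\
    (forall x, d (f x) (g x) <= a) /\
    (forall x, d (fi x) (gi x) <= b) /\
    (forall x y, x <> y -> Rabs (ln (d (f x) (f y) / d (g x) (g y))) <= c) /\
    (forall x y, x <> y -> Rabs (ln (d (fi x) (fi y) / d (gi x) (gi y))) <= e).

End Defs.

From Stdlib Require Import Reals ZArith.
From Stdlib Require Import Lra Classical.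
Open Scope R_scope.

(* If [d] is [f]-hyperbolic with rate [lam] at scale [delta], and the logarithmic
   Lipschitz distance between [f] and [g] (and between their inverses) is at most
   [C < ln lam], then [d] is [g]-hyperbolic at the same scale with rate
   [lam / exp C > 1].  Hyperbolicity with a rate [mu > 1] forces expansivity: if the
   whole orbit of [x <> y] stays [delta]-close, then along one time direction the
   distances grow by a factor [mu] at every step, hence without bound. *)

Definition hyperbolic_on {X : Type} (d : X -> X -> R) (g gi : X -> X) (delta mu : R) :=
  forall x y, d x y < delta -> Rmax (d (g x) (g y)) (d (gi x) (gi y)) >= mu * d x y.

Lemma growing_seq_unbounded {u : nat -> R} {mu : R} :
  1 < mu -> 0 < u 0%nat -> (forall k, u (S k) >= mu * u k) ->
  forall B, exists k, B < u k.
Proof.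
  intros Hmu Hu0 Hstep B.
  set (gap := (mu - 1) * u 0%nat).
  assert (Hgap : 0 < gap) by (unfold gap; nra).
  assert (Hlin : forall k, u k >= u 0%nat + INR k * gap).
  { induction k as [|k IH]; [simpl; lra|].
    rewrite S_INR. specialize (Hstep k).
    assert (u 0%nat <= u k) by (pose proof (pos_INR k); nra).
    unfold gap in *. nra. }
  destruct (INR_unbounded ((B - u 0%nat) / gap)) as [n Hn].
  exists n. specialize (Hlin n).
  assert (B - u 0%nat < INR n * gap).
  { replace (B - u 0%nat) with ((B - u 0%nat) / gap * gap) by (field; lra).
    apply Rmult_lt_compat_r; assumption. }
  lra.
Qed.

(* The one-step expansion condition propagates along the sequence once it holds at
   the start, because [u k < u (S k)] rules out [u k] as the maximum. *)
Lemma hyperbolic_seq_growing {u : nat -> R} {mu : R} :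
  1 < mu -> 0 < u 0%nat -> u 1%nat >= mu * u 0%nat ->
  (forall k, Rmax (u (S (S k))) (u k) >= mu * u (S k)) ->
  forall k, u (S k) >= mu * u k.
Proof.
  intros Hmu Hu0 Hu1 Hhyp.
  assert (Hpos : forall k, 0 < u k /\ u (S k) >= mu * u k).
  { induction k as [|k [Hpos Hgrow]]; [split; assumption|].
    assert (Hlt : u k < u (S k)) by nra.
    split; [lra|].
    specialize (Hhyp k). unfold Rmax in Hhyp.
    destruct (Rle_dec (u (S (S k))) (u k)); [nra | lra]. }
  intro k. apply Hpos.
Qed.

Lemma ziter_of_nat {X : Type} (g gi : X -> X) (k : nat) (x : X) :
  ziter g gi (Z.of_nat k) x = Nat.iter k g x.
Proof. destruct k; simpl; [reflexivity|]. now rewrite SuccNat2Pos.id_succ. Qed.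

Lemma ziter_opp_of_nat {X : Type} (g gi : X -> X) (k : nat) (x : X) :
  ziter g gi (- Z.of_nat k) x = Nat.iter k gi x.
Proof. destruct k; simpl; [reflexivity|]. now rewrite SuccNat2Pos.id_succ. Qed.

Lemma cancel_neq {X : Type} {h hi : X -> X} {p q : X} :
  (forall z, hi (h z) = z) -> p <> q -> h p <> h q.
Proof. intros hK Hpq Heq. apply Hpq. now rewrite <- (hK p), <- (hK q), Heq. Qed.

Section Hyperbolicity.
Context {X : Type} {d : X -> X -> R}.
Hypothesis d_metric : is_metric d.

Lemma dist_pos {x y : X} : x <> y -> 0 < d x y.
Proof.
  destruct d_metric as [Dnn [Dz _]]. intro Hxy.
  destruct (Dnn x y) as [|Hd]; [assumption|].
  exfalso. apply Hxy, Dz. now symmetry.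
Qed.

Lemma dist_le_exp_log_ratio {F G : X -> X} {C : R} {p q : X} :
  F p <> F q -> G p <> G q ->
  Rabs (ln (d (F p) (F q) / d (G p) (G q))) <= C ->
  d (F p) (F q) <= exp C * d (G p) (G q).
Proof.
  intros HF HG Hratio.
  pose proof (dist_pos HF) as PF. pose proof (dist_pos HG) as PG.
  set (r := d (F p) (F q) / d (G p) (G q)) in *.
  assert (Hr : 0 < r) by (apply Rdiv_lt_0_compat; assumption).
  assert (Hle : r <= exp C).
  { rewrite <- (exp_ln r) by assumption.
    assert (Hln : ln r <= C) by (eapply Rle_trans; [apply Rle_abs | exact Hratio]).
    destruct (Rle_lt_or_eq_dec _ _ Hln) as [Hlt | ->];
      [left; now apply exp_increasing | right; reflexivity]. }
  replace (d (F p) (F q)) with (r * d (G p) (G q)) by (unfold r; field; lra).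
  apply Rmult_le_compat_r; lra.
Qed.

Lemma hyperbolic_on_perturb {f fi g gi : X -> X} {delta lam C : R} :
  (forall x, fi (f x) = x) -> (forall x, f (fi x) = x) ->
  (forall x, gi (g x) = x) -> (forall x, g (gi x) = x) ->
  hyperbolic_on d f fi delta lam ->
  (forall x y, x <> y -> Rabs (ln (d (f x) (f y) / d (g x) (g y))) <= C) ->
  (forall x y, x <> y -> Rabs (ln (d (fi x) (fi y) / d (gi x) (gi y))) <= C) ->
  hyperbolic_on d g gi delta (lam / exp C).
Proof.
  intros fK fiK gK giK Hf Hc He p q Hpq.
  assert (HE : 0 < exp C) by apply exp_pos.
  destruct (classic (p = q)) as [<- | Hne].
  { destruct d_metric as [Dnn [Dz _]].
    rewrite (proj2 (Dz p p) eq_refl), Rmult_0_r.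
    apply Rle_ge. eapply Rle_trans; [apply Dnn | apply Rmax_l]. }
  assert (Bf : d (f p) (f q) <= exp C * d (g p) (g q)).
  { apply dist_le_exp_log_ratio; [apply (cancel_neq fK) | apply (cancel_neq gK) | apply Hc];
      assumption. }
  assert (Bfi : d (fi p) (fi q) <= exp C * d (gi p) (gi q)).
  { apply dist_le_exp_log_ratio; [apply (cancel_neq fiK) | apply (cancel_neq giK) | apply He];
      assumption. }
  assert (Hmax : lam * d p q <= exp C * Rmax (d (g p) (g q)) (d (gi p) (gi q))).
  { specialize (Hf p q Hpq). unfold Rmax in *.
    repeat destruct Rle_dec; nra. }
  apply Rle_ge. unfold Rdiv.
  replace (lam * / exp C * d p q) with (/ exp C * (lam * d p q)) by ring.
  replace (Rmax (d (g p) (g q)) (d (gi p) (gi q)))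
    with (/ exp C * (exp C * Rmax (d (g p) (g q)) (d (gi p) (gi q)))) by (field; lra).
  apply Rmult_le_compat_l; [left; apply Rinv_0_lt_compat|]; assumption.
Qed.

Lemma hyperbolic_on_inverse {g gi : X -> X} {delta mu : R} :
  hyperbolic_on d g gi delta mu -> hyperbolic_on d gi g delta mu.
Proof. intros Hg x y Hxy. rewrite Rmax_comm. now apply Hg. Qed.

Lemma forward_orbit_escapes {h hi : X -> X} {delta delta' mu : R} {x y : X} :
  (forall z, hi (h z) = z) -> 1 < mu -> delta' < delta ->
  hyperbolic_on d h hi delta mu ->
  x <> y -> d (h x) (h y) >= mu * d x y ->
  exists k, delta' < d (Nat.iter k h x) (Nat.iter k h y).
Proof.
  intros hK Hmu Hdelta Hh Hxy Hfirst.
  apply NNPP. intro Hstay.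
  assert (Hbound : forall k, d (Nat.iter k h x) (Nat.iter k h y) <= delta').
  { intro k. apply Rnot_lt_le. intro Hk. apply Hstay. now exists k. }
  set (u := fun k => d (Nat.iter k h x) (Nat.iter k h y)).
  assert (Hstep : forall k, Rmax (u (S (S k))) (u k) >= mu * u (S k)).
  { intro k. unfold u. specialize (Hbound (S k)).
    pose proof (Hh (Nat.iter (S k) h x) (Nat.iter (S k) h y) ltac:(lra)) as Hk.
    simpl in Hk |- *. now rewrite !hK in Hk. }
  destruct (growing_seq_unbounded Hmu (dist_pos Hxy)
              (hyperbolic_seq_growing Hmu (dist_pos Hxy) Hfirst Hstep) delta')
    as [k Hk].
  specialize (Hbound k). unfold u in Hk. lra.
Qed.

Lemma hyperbolic_expansive {g gi : X -> X} {delta delta' mu : R} :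
  (forall x, gi (g x) = x) -> (forall x, g (gi x) = x) ->
  1 < mu -> delta' < delta -> hyperbolic_on d g gi delta mu ->
  expansive_const d g gi delta'.
Proof.
  intros gK giK Hmu Hdelta Hg x y Horbit.
  apply NNPP. intro Hxy.
  assert (Hfirst : Rmax (d (g x) (g y)) (d (gi x) (gi y)) >= mu * d x y).
  { apply Hg. specialize (Horbit 0%Z). simpl in Horbit. lra. }
  unfold Rmax in Hfirst. destruct Rle_dec in Hfirst.
  - destruct (forward_orbit_escapes giK Hmu Hdelta (hyperbolic_on_inverse Hg) Hxy Hfirst)
      as [k Hk].
    specialize (Horbit (- Z.of_nat k)%Z). rewrite !ziter_opp_of_nat in Horbit. lra.
  - destruct (forward_orbit_escapes gK Hmu Hdelta Hg Hxy Hfirst) as [k Hk].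
    specialize (Horbit (Z.of_nat k)). rewrite !ziter_of_nat in Horbit. lra.
Qed.

Lemma dL_lt_log_ratio_bound {f fi g gi : X -> X} {eps : R} {x0 y0 : X} :
  dL_lt d f fi g gi eps -> x0 <> y0 ->
  exists C, C < eps /\
    (forall x y, x <> y -> Rabs (ln (d (f x) (f y) / d (g x) (g y))) <= C) /\
    (forall x y, x <> y -> Rabs (ln (d (fi x) (fi y) / d (gi x) (gi y))) <= C).
Proof.
  intros [a [b [c [e [Hsum [Ha [Hb [Hc He]]]]]]]] Hxy.
  destruct d_metric as [Dnn _].
  assert (0 <= a) by (eapply Rle_trans; [apply Dnn | apply (Ha x0)]).
  assert (0 <= b) by (eapply Rle_trans; [apply Dnn | apply (Hb x0)]).
  assert (0 <= c) by (eapply Rle_trans; [apply Rabs_pos | apply (Hc x0 y0 Hxy)]).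
  assert (0 <= e) by (eapply Rle_trans; [apply Rabs_pos | apply (He x0 y0 Hxy)]).
  exists (Rmax c e). split; [unfold Rmax; destruct Rle_dec; lra|].
  split; intros x y Hne.
  - eapply Rle_trans; [apply Hc, Hne | apply Rmax_l].
  - eapply Rle_trans; [apply He, Hne | apply Rmax_r].
Qed.

End Hyperbolicity.

Theorem mainTheorem6 (X : Type) (d : X -> X -> R) (f fi : X -> X) :
  is_metric d -> metric_compact d ->
  bilipschitz_homeo d f fi ->
  f_hyperbolic d f fi ->
  exists eps delta, 0 < eps /\ 0 < delta /\
    forall g gi : X -> X,
      bilipschitz_homeo d g gi ->
      dL_lt d f fi g gi eps ->
      expansive_const d g gi delta.
Proof.
  intros Hd _ [fK [fiK _]] [delta [lam [Hdelta [Hlam Hf]]]].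
  assert (Hln : 0 < ln lam) by (rewrite <- ln_1; apply ln_increasing; lra).
  exists (ln lam), (delta / 2). split; [exact Hln|]. split; [lra|].
  intros g gi [gK [giK _]] Hclose x y Horbit.
  destruct (classic (x = y)) as [| Hxy]; [assumption|].
  destruct (dL_lt_log_ratio_bound Hd Hclose Hxy) as [C [HC [Hc He]]].
  assert (HexpC : exp C < lam) by (rewrite <- (exp_ln lam) by lra; now apply exp_increasing).
  assert (Hmu : 1 < lam / exp C).
  { pose proof (exp_pos C). apply (Rmult_lt_reg_r (exp C)); [assumption|].
    unfold Rdiv. rewrite Rmult_assoc, Rinv_l; lra. }
  refine (hyperbolic_expansive Hd gK giK Hmu _
            (hyperbolic_on_perturb Hd fK fiK gK giK Hf Hc He) x y Horbit).
  lra.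
Qed.
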